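(* Suppose AS.1 and AS.2 hold. Consider a recursive iteration $(\ell,i)$ of the MOFFTR algorithm described in the context, and suppose that $i_{\ell-1}\ge1$ iterations of the algorithm have been completed at level $\ell-1$ (iterates $x_{\ell-1,k}$, gradients $g_{\ell-1,k}=\nabla h_{\ell-1}(x_{\ell-1,k})$, steps $s_{\ell-1,k}$). Then, with $\delta_{\ell-1}=\alpha\|\Delta_{\ell,i}\|$, \[ \Big|g_{\ell,i}^Ts_{\ell,i}-\frac1\omega\sum_{k=0}^{i_{\ell-1}-1}g_{\ell-1,k}^Ts_{\ell-1,k}\Big|\le\frac{2\,i^{\max}_{\ell-1}\,L\,\delta_{\ell-1}^2}{\omega\,\sigma_{\min}[P_\ell]^2}. \]
   Context: Notation: $\|\cdot\|$ is the Euclidean norm (spectral norm for matrices); $|x|$ is the componentwise absolute value; $\sigma_{\min}[M]$ is the smallest singular value of $M$; for a positive vector $w$, $D(w)=\mathrm{diag}(1/w_1,\dots,1/w_m)$. Setting: $r\ge1$ levels; functions $f_\ell:\mathbb{R}^{n_\ell}\to\mathbb{R}$, $n_r=n$, $f_r=f$; for $\ell\ge2$ full-rank linear $R_\ell:\mathbb{R}^{n_\ell}\to\mathbb{R}^{n_{\ell-1}}$, $P_\ell:\mathbb{R}^{n_{\ell-1}}\to\mathbb{R}^{n_\ell}$ with $\omega P_\ell=R_\ell^T$, $\omega>0$. AS.1: each $f_\ell$ is continuously differentiable. AS.2: each $\nabla f_\ell$ is Lipschitz with constant $L\ge0$. Algorithm MOFFTR$(\ell,h_\ell,x_{\ell,0},\epsilon_\ell,i^{\max}_\ell,\delta_\ell,w_{\ell,0})$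 with constants $\kappa_R\in(0,1)$, $\alpha\ge1$, $\tau\in(0,1]$, $\kappa_B\ge1$, $\varsigma_j\in(0,1]$; $i=0$. Step 1: if $\ell<r$ and $\|P_{\ell+1}(x_{\ell,i}-x_{\ell,0})\|>\delta_\ell$, return $x_{\ell,i-1}$. Else $g_{\ell,i}=\nabla h_\ell(x_{\ell,i})$; if $\|g_{\ell,i}\|\le\epsilon_\ell$ or $i=i^{\max}_\ell$, return $x_{\ell,i}$. Step 2: $\widehat\Delta_{\ell,i}=D(w_{\ell,i})|g_{\ell,i}|$; $\Delta_{\ell,i}=\widehat\Delta_{\ell,i}$ if $\ell=r$, else $\Delta_{\ell,i}=\min[2\delta_\ell/(\|P_{\ell+1}\|\|\widehat\Delta_{\ell,i}\|),1]\widehat\Delta_{\ell,i}$. For $i>0$ choose $w_{\ell,i}$ with $w_{\ell,i,j}\ge\varsigma_j$. If a Taylor step is chosen, go to Step 4. Step 3: choose $w_{\ell-1,0}$ with $w_{\ell-1,0,j}\ge\varsigma_j$, a variant-dependent ''lower-level weights large enough'' condition, and $\|D(w_{\ell-1,0})|R_\ell g_{\ell,i}|\|\le\alpha\|\Delta_{\ell,i}\|/\|P_\ell\|$. If $\ell=1$ or $\sum_j[R_\ell g_{\ell,i}]_j^2/w_{\ell-1,0,j}<\kappa_R\sum_j g_{\ell,i,j}^2/w_{\ell,i,j}$, go to Step 4. Otherwise (recursive iteration) $s_{\ell,i}=P_\ell[\mathrm{MOFFTR}(\ell-1,h_{\ell-1},R_\ell x_{\ell,i},\epsilon_{\ell-1},i^{\max}_{\ell-1},\alpha\|\Delta_{\ell,i}\|,w_{\ell-1,0})-R_\ell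 x_{\ell,i}]$ with $h_{\ell-1}(x_{\ell-1,0}+s)=f_{\ell-1}(x_{\ell-1,0}+s)+(R_\ell g_{\ell,i}-\nabla f_{\ell-1}(x_{\ell-1,0}))^Ts$, $x_{\ell-1,0}=R_\ell x_{\ell,i}$; go to Step 5. Step 4 (Taylor iteration): symmetric $B$ with $\|B\|\le\kappa_B$; step $s$ with $|s_j|\le\Delta_{\ell,i,j}$ and $g^Ts+\frac12s^TBs\le\tau(g^Ts^Q+\frac12(s^Q)^TBs^Q)$, $s^L_j=-\mathrm{sign}(g_j)\Delta_{\ell,i,j}$, $s^Q=\gamma s^L$, $\gamma=\min[1,|g^Ts^L|/((s^L)^TBs^L)]$ if $(s^L)^TBs^L>0$, else $\gamma=1$. Step 5: $x_{\ell,i+1}=x_{\ell,i}+s_{\ell,i}$, $i\leftarrow i+1$, go to Step 1. Top-level call MOFFTR$(r,f,x_{r,0},\epsilon_r,i^{\max}_r,+\infty,w_{r,0})$, $h_r=f$. *)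

From HB Require Import structures.
From mathcomp Require Import all_boot all_order all_algebra.
From mathcomp Require Import all_classical all_reals all_analysis.
Set Implicit Arguments. Unset Strict Implicit. Unset Printing Implicit Defensive.
Import Order.TTheory GRing.Theory Num.Theory.
Import numFieldNormedType.Exports.
Local Open Scope classical_set_scope.
Local Open Scope ring_scope.

Definition dotv {R : realType} {k : nat} (u v : 'cV[R]_k) : R :=
  \sum_(j < k) u j 0 * v j 0.
Definition enorm {R : realType} {k : nat} (v : 'cV[R]_k) : R :=
  Num.sqrt (dotv v v).

Definition sigma_min {R : realType} {p q : nat} (M : 'M[R]_(p, q)) : R :=
  inf [set enorm (M *m v) | v in [set v : 'cV[R]_q | enorm v = 1]].

(* gradient of the lower-level model
   h_{l-1}(x0 + s) = f_{l-1}(x0 + s) + (Rg - grad f_{l-1}(x0))^T s *)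
Definition hgrad {R : realType} {m : nat} (gradf : 'cV[R]_m -> 'cV[R]_m)
  (Rg x0 : 'cV[R]_m) (y : 'cV[R]_m) : 'cV[R]_m :=
  gradf y + (Rg - gradf x0).

(* The lower-level model h is first-order coherent: its gradient at x_0 = R x
   is R g, and P = R^T / omega, so g^T s = omega^-1 sum_k (grad h(x_0))^T s_k.
   Hence the gap is omega^-1 sum_k (grad f(x_0) - grad f(x_k))^T s_k.  The
   trust-region test ||P (x_k - x_0)|| <= delta together with
   ||P w|| >= sigma_min[P] ||w|| keeps every lower-level iterate within
   r = delta / sigma_min[P] of x_0, so by Cauchy-Schwarz and the Lipschitz
   bound each of the at most imax terms is at most L r (r + r). *)

From HB Require Import structures.
From mathcomp Require Import all_boot all_order all_algebra.
From mathcomp Require Import all_classical all_reals all_analysis.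
From mathcomp Require Import ring lra.
Set Implicit Arguments. Unset Strict Implicit. Unset Printing Implicit Defensive.
Import Order.TTheory GRing.Theory Num.Theory.
Import numFieldNormedType.Exports.
Local Open Scope classical_set_scope.
Local Open Scope ring_scope.

Section EuclideanNorm.
Variable R : realType.
Implicit Types (k : nat).

Lemma dotvE k (u v : 'cV[R]_k) : dotv u v = (u^T *m v) 0 0.
Proof. by rewrite mxE; apply: eq_bigr => j _; rewrite mxE. Qed.

Lemma dotvC k (u v : 'cV[R]_k) : dotv u v = dotv v u.
Proof. by apply: eq_bigr => j _; rewrite mulrC. Qed.

Lemma dotv0l k (v : 'cV[R]_k) : dotv 0 v = 0.
Proof. by rewrite dotvE trmx0 mul0mx mxE. Qed.

Lemma dotv0r k (u : 'cV[R]_k) : dotv u 0 = 0.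
Proof. by rewrite dotvC dotv0l. Qed.

Lemma dotvDr k (u v w : 'cV[R]_k) : dotv u (v + w) = dotv u v + dotv u w.
Proof. by rewrite !dotvE mulmxDr mxE. Qed.

Lemma dotvBr k (u v w : 'cV[R]_k) : dotv u (v - w) = dotv u v - dotv u w.
Proof. by rewrite !dotvE mulmxBr !mxE. Qed.

Lemma dotvZr k (a : R) (u v : 'cV[R]_k) : dotv u (a *: v) = a * dotv u v.
Proof. by rewrite !dotvE -scalemxAr mxE. Qed.

Lemma dotvDl k (u v w : 'cV[R]_k) : dotv (v + w) u = dotv v u + dotv w u.
Proof. by rewrite dotvC dotvDr !(dotvC u). Qed.

Lemma dotvBl k (u v w : 'cV[R]_k) : dotv (v - w) u = dotv v u - dotv w u.
Proof. by rewrite dotvC dotvBr !(dotvC u). Qed.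

Lemma dotvZl k (a : R) (u v : 'cV[R]_k) : dotv (a *: v) u = a * dotv v u.
Proof. by rewrite dotvC dotvZr dotvC. Qed.

Lemma dotv_sumr k N (u : 'cV[R]_k) (F : 'I_N -> 'cV[R]_k) :
  dotv u (\sum_(i < N) F i) = \sum_(i < N) dotv u (F i).
Proof.
by rewrite dotvE mulmx_sumr summxE; apply: eq_bigr => i _; rewrite dotvE.
Qed.

Lemma dotv_trmx p k (A : 'M[R]_(p, k)) (u : 'cV[R]_k) (v : 'cV[R]_p) :
  dotv u (A^T *m v) = dotv (A *m u) v.
Proof. by rewrite !dotvE mulmxA trmx_mul. Qed.

Lemma dotvv_ge0 k (v : 'cV[R]_k) : 0 <= dotv v v.
Proof. by apply: sumr_ge0 => i _; exact: sqr_ge0. Qed.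

Lemma dotvv_eq0 k (v : 'cV[R]_k) : (dotv v v == 0) = (v == 0).
Proof.
apply/idP/eqP => [/eqP vv0|->]; last by rewrite dotv0l.
apply/matrixP => i j; rewrite (ord1 j) mxE.
have /(_ i isT)/eqP := psumr_eq0P (fun i _ => sqr_ge0 (v i 0)) vv0.
by rewrite mulf_eq0 orbb => /eqP.
Qed.

Lemma enorm_ge0 k (v : 'cV[R]_k) : 0 <= enorm v.
Proof. exact: sqrtr_ge0. Qed.

Lemma enorm0 k : enorm (0 : 'cV[R]_k) = 0.
Proof. by rewrite /enorm dotv0l sqrtr0. Qed.

Lemma enorm_gt0 k (v : 'cV[R]_k) : v != 0 -> 0 < enorm v.
Proof. by rewrite sqrtr_gt0 lt_def dotvv_eq0 dotvv_ge0 andbT. Qed.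

Lemma sqr_enorm k (v : 'cV[R]_k) : enorm v ^+ 2 = dotv v v.
Proof. by rewrite sqr_sqrtr // dotvv_ge0. Qed.

Lemma enormZ k (a : R) (v : 'cV[R]_k) : enorm (a *: v) = `|a| * enorm v.
Proof. by rewrite /enorm dotvZl dotvZr mulrA -expr2 sqrtrM ?sqr_ge0 // sqrtr_sqr. Qed.

Lemma enormN k (v : 'cV[R]_k) : enorm (- v) = enorm v.
Proof. by rewrite -scaleN1r enormZ normrN normr1 mul1r. Qed.

Lemma enorm_normalize k (v : 'cV[R]_k) : v != 0 -> enorm ((enorm v)^-1 *: v) = 1.
Proof.
by move=> v0; rewrite enormZ ger0_norm ?invr_ge0 ?enorm_ge0 // mulVf ?gt_eqF ?enorm_gt0.
Qed.

Lemma normr_dotv_le k (u v : 'cV[R]_k) : `|dotv u v| <= enorm u * enorm v.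
Proof.
have [->|u0] := eqVneq u 0; first by rewrite dotv0l normr0 mulr_ge0 ?enorm_ge0.
have [->|v0] := eqVneq v 0; first by rewrite dotv0r normr0 mulr_ge0 ?enorm_ge0.
have := enorm_gt0 u0; have := enorm_gt0 v0.
set a := enorm u; set b := enorm v => b_gt0 a_gt0.
have ab_gt0 : 0 < a * b by rewrite mulr_gt0.
have h1 := dotvv_ge0 (b *: u - a *: v); have h2 := dotvv_ge0 (b *: u + a *: v).
rewrite !(dotvBl, dotvDl, dotvBr, dotvDr, dotvZl, dotvZr) (dotvC v u) in h1 h2.
rewrite -!sqr_enorm -/a -/b in h1 h2.
rewrite ler_norml; apply/andP; split; nra.
Qed.

Lemma enormD k (u v : 'cV[R]_k) : enorm (u + v) <= enorm u + enorm v.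
Proof.
rewrite -ler_sqr ?nnegrE ?addr_ge0 ?enorm_ge0 // sqrrD !sqr_enorm.
rewrite dotvDl !dotvDr (dotvC v u).
have := normr_dotv_le u v; rewrite ler_norml => /andP[_]; lra.
Qed.

Lemma enormB k (u v : 'cV[R]_k) : enorm (u - v) <= enorm u + enorm v.
Proof. by rewrite -(enormN v) enormD. Qed.

Lemma enorm_mulmx_bounded p k (A : 'M[R]_(p, k)) :
  exists2 K, 0 <= K & forall v, enorm (A *m v) <= K * enorm v.
Proof.
pose S := \sum_i enorm (row i A)^T ^+ 2.
have S_ge0 : 0 <= S by apply: sumr_ge0 => i _; exact: sqr_ge0.
exists (Num.sqrt S) => [|v]; first exact: sqrtr_ge0.
rewrite /enorm -sqrtrM // ler_wsqrtr // {1}/dotv -sqr_enorm mulr_suml.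
apply: ler_sum => i _; rewrite -expr2.
have -> : (A *m v) i 0 = dotv (row i A)^T v by rewrite dotvE trmxK -row_mul !mxE.
rewrite -exprMn -real_normK ?num_real // lerXn2r ?nnegrE ?mulr_ge0 ?enorm_ge0 //.
exact: normr_dotv_le.
Qed.

End EuclideanNorm.

Section SmallestSingularValue.
Variables (R : realType) (p q : nat) (P : 'M[R]_(p, q)).

Let unit_images := [set enorm (P *m v) | v in [set v : 'cV[R]_q | enorm v = 1]].

Lemma sigma_min_ge0 : 0 <= sigma_min P.
Proof.
rewrite /sigma_min -/unit_images.
have [->|/set0P ne] := eqVneq unit_images set0; first by rewrite inf0.
by apply: lb_le_inf ne _ => _ [v _ <-]; exact: enorm_ge0.
Qed.

Lemma sigma_min_mulmx_le (w : 'cV[R]_q) : sigma_min P * enorm w <= enorm (P *m w).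
Proof.
have [->|w0] := eqVneq w 0; first by rewrite mulmx0 !enorm0 mulr0.
have lbP : has_lbound unit_images by exists 0 => _ [v _ <-]; exact: enorm_ge0.
have : sigma_min P <= enorm (P *m ((enorm w)^-1 *: w)).
  by apply: (ge_inf lbP); exists ((enorm w)^-1 *: w); rewrite //= enorm_normalize.
rewrite -scalemxAr enormZ ger0_norm ?invr_ge0 ?enorm_ge0 //.
by rewrite ler_pdivlMl ?enorm_gt0 // mulrC.
Qed.

Lemma sigma_min_gt0 (Q : 'M[R]_(q, p)) : (0 < q)%N -> Q *m P = 1%:M -> 0 < sigma_min P.
Proof.
move=> q_gt0 QP; have [K K_ge0 QK] := enorm_mulmx_bounded Q.
have inv_bound v : enorm v <= K * enorm (P *m v).
  by rewrite -{1}[v]mul1mx -QP -mulmxA QK.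
pose e : 'cV[R]_q := delta_mx (Ordinal q_gt0) 0.
have e0 : e != 0.
  by apply/eqP => /matrixP/(_ (Ordinal q_gt0) 0)/eqP; rewrite !mxE !eqxx oner_eq0.
have := inv_bound ((enorm e)^-1 *: e); rewrite enorm_normalize // => Ke.
have K_gt0 : 0 < K.
  by rewrite lt_def K_ge0 andbT; apply: contraTneq Ke => ->; rewrite mul0r ler10.
apply: lt_le_trans (_ : K^-1 <= _); first by rewrite invr_gt0.
apply: lb_le_inf => [|_ [v /= v1 <-]].
  by exists (enorm (P *m ((enorm e)^-1 *: e))), ((enorm e)^-1 *: e);
    rewrite /= ?enorm_normalize.
by rewrite -[K^-1]mulr1 ler_pdivrMl // -v1 inv_bound.
Qed.

Lemma enorm_le_div_sigma_min (Q : 'M[R]_(q, p)) (w : 'cV[R]_q) :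
  Q *m P = 1%:M -> enorm w <= enorm (P *m w) / sigma_min P.
Proof.
move=> QP; have [->|w0] := eqVneq w 0; first by rewrite mulmx0 !enorm0 mul0r.
have q_gt0 : (0 < q)%N by move: w w0; case: (q) => // w; rewrite flatmx0 eqxx.
by rewrite ler_pdivlMr ?(sigma_min_gt0 q_gt0 QP) // mulrC sigma_min_mulmx_le.
Qed.

End SmallestSingularValue.

Section LowerLevelIterates.
Variables (R : realType) (m : nat) (gradf : 'cV[R]_m -> 'cV[R]_m) (N : nat).
Variables (xs ss : nat -> 'cV[R]_m).
Hypothesis xs_step : forall k, (k < N)%N -> xs k.+1 = xs k + ss k.

Lemma sum_steps k : (k <= N)%N -> \sum_(i < k) ss i = xs k - xs 0%N.
Proof.
move=> kN; rewrite -(big_mkord xpredT) (telescope_sumr_eq xs) // => i /= ik.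
by rewrite xs_step ?(leq_trans ik) // addrC addKr.
Qed.

Lemma recursive_step_gapE n (omega : R) (Rl : 'M[R]_(m, n)) (g : 'cV[R]_n) :
  dotv g ((omega^-1 *: Rl^T) *m (xs N - xs 0%N))
    - omega^-1 * \sum_(k < N) dotv (hgrad gradf (Rl *m g) (xs 0%N) (xs k)) (ss k)
  = omega^-1 * \sum_(k < N) dotv (gradf (xs 0%N) - gradf (xs k)) (ss k).
Proof.
rewrite -scalemxAl dotvZr dotv_trmx -sum_steps // dotv_sumr -mulrBr -sumrB.
congr (_ * _); apply: eq_bigr => k _; rewrite -dotvBl /hgrad; congr dotv.
by rewrite addrCA opprD addrA subrr add0r opprB.
Qed.

Variables (L r : R).
Hypothesis L_ge0 : 0 <= L.
Hypothesis gradf_lipschitz : forall y z, enorm (gradf y - gradf z) <= L * enorm (y - z).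
Hypothesis xs_near : forall k, (k <= N)%N -> enorm (xs k - xs 0%N) <= r.

Lemma gradient_drift_le k : (k < N)%N ->
  `|dotv (gradf (xs 0%N) - gradf (xs k)) (ss k)| <= 2 * L * r ^+ 2.
Proof.
move=> kN; apply: le_trans (normr_dotv_le _ _) _.
have -> : 2 * L * r ^+ 2 = (L * r) * (r + r) by ring.
apply: ler_pM; rewrite ?enorm_ge0 //.
  apply: le_trans (gradf_lipschitz _ _) _.
  by rewrite -opprB enormN ler_wpM2l // xs_near // ltnW.
have -> : ss k = (xs k.+1 - xs 0%N) - (xs k - xs 0%N).
  by rewrite xs_step // opprB addrA subrK addrAC subrr add0r.
by apply: le_trans (enormB _ _) _; rewrite lerD ?xs_near // ltnW.
Qed.

Lemma sum_gradient_drift_le :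
  `|\sum_(k < N) dotv (gradf (xs 0%N) - gradf (xs k)) (ss k)| <= N%:R * (2 * L * r ^+ 2).
Proof.
apply: le_trans (ler_norm_sum _ _ _) _.
apply: le_trans (ler_sum _ (fun k _ => gradient_drift_le (ltn_ord k))) _.
by rewrite sumr_const card_ord [N%:R * _]mulr_natl.
Qed.

End LowerLevelIterates.

Theorem lemma3p4 (R : realType) (m n : nat) (omega L alpha : R)
  (Rl : 'M[R]_(m, n))
  (f : 'cV[R]_m -> R) (gradf : 'cV[R]_m -> 'cV[R]_m)
  (x g Delta : 'cV[R]_n) (imax N : nat) (xs ss : nat -> 'cV[R]_m) :
  let P := omega^-1 *: Rl^T in
  let delta := alpha * enorm Delta in
  0 < omega -> 0 <= L -> 1 <= alpha ->
  \rank Rl = m ->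
  (* AS.1 for f_{l-1}: differentiable with gradient gradf *)
  (forall y, differentiable f y) ->
  (forall y v, 'd f y v = dotv (gradf y) v) ->
  (* AS.2: gradient Lipschitz with constant L *)
  (forall y z, enorm (gradf y - gradf z) <= L * enorm (y - z)) ->
  (* i_{l-1} = N >= 1 completed lower-level iterations, N <= imax *)
  (1 <= N)%N -> (N <= imax)%N ->
  xs 0%N = Rl *m x ->
  (forall k, (k < N)%N -> xs k.+1 = xs k + ss k) ->
  (* lower-level trust-region condition of Step 1 with delta_{l-1} *)
  (forall k, (k <= N)%N -> enorm (P *m (xs k - xs 0%N)) <= delta) ->
  let s := P *m (xs N - xs 0%N) in
  `| dotv g s
     - omega^-1 * \sum_(k < N) dotv (hgrad gradf (Rl *m g) (xs 0%N) (xs k)) (ss k) |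
  <= 2 * imax%:R * L * delta ^+ 2 / (omega * sigma_min P ^+ 2).
Proof.
move=> P delta omega_gt0 L_ge0 _ rank_Rl _ _ gradf_lipschitz _ N_le_imax _ xs_step xs_trust.
cbv zeta.
have [Q QP] : exists Q, Q *m P = 1%:M.
  have /row_freeP[B RlB] : row_free Rl by rewrite /row_free rank_Rl.
  exists (omega *: B^T).
  by rewrite -scalemxAl scalemxAr scalerA mulfV ?gt_eqF // scale1r -trmx_mul RlB trmx1.
set r := delta / sigma_min P.
have xs_near k : (k <= N)%N -> enorm (xs k - xs 0%N) <= r.
  move=> kN; apply: le_trans (enorm_le_div_sigma_min _ QP) _.
  by rewrite ler_wpM2r ?invr_ge0 ?sigma_min_ge0 ?xs_trust.
have -> : 2 * imax%:R * L * delta ^+ 2 / (omega * sigma_min P ^+ 2)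
        = omega^-1 * (imax%:R * (2 * L * r ^+ 2)).
  by rewrite /r expr_div_n invfM; ring.
rewrite (recursive_step_gapE gradf xs_step) normrM gtr0_norm ?invr_gt0 //.
rewrite ler_pM2l ?invr_gt0 //.
apply: le_trans (sum_gradient_drift_le xs_step L_ge0 gradf_lipschitz xs_near) _.
by rewrite ler_wpM2r ?ler_nat // mulr_ge0 ?sqr_ge0 ?mulr_ge0.
Qed.
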